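(* Let $G$ be a graph with $m$ edges whose vertex set is partitioned as $V(G)=A\sqcup C$, where $|A|$ is bounded by a fixed constant, $G[A]\cong M$, $C$ is an independent set, and all but at most one vertex of $C$ are adjacent to every vertex of $A$. Then $$\lambda(G)=\sqrt{m}+\frac{e(M)}{v(M)}+O(m^{-1/2}),$$ where the implied constant depends only on the bound on $|A|$.
   Context: All graphs are finite and simple. $e(M)$ and $v(M)$ denote the numbers of edges and vertices of $M$; $\lambda(G)$ is the spectral radius of the adjacency matrix of $G$. *)

From HB Require Import structures.
From mathcomp Require Import all_boot all_order all_algebra all_field.
Set Implicit Arguments. Unset Strict Implicit. Unset Printing Implicit Defensive.
Import Order.TTheory GRing.Theory Num.Theory.
Local Open Scope ring_scope.

(* A finite simple graph: vertex type T : finType, adjacency e : rel T,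
   assumed symmetric and irreflexive in the theorem. *)

Definition edges (T : finType) (e : rel T) : {set {set T}} :=
  [set E : {set T} | [exists x, exists y, e x y && (E == [set x; y])]].

Definition nedges (T : finType) (e : rel T) : nat := #|edges e|.

Definition nedges_in (T : finType) (e : rel T) (A : {set T}) : nat :=
  #|[set E in edges e | E \subset A]|.

Definition adjmx (T : finType) (e : rel T) : 'M[algC]_(#|T|) :=
  \matrix_(i, j) (e (enum_val i) (enum_val j))%:R.

Definition is_spectral_radius (n : nat) (M : 'M[algC]_n) (r : algC) : Prop :=
  (exists2 z, eigenvalue M z & `|z| = r) /\
  (forall z, eigenvalue M z -> `|z| <= r).

(* Write a = |A|, e0 = e(M), s = sqrt m and C for the complement of A, so that
   s^2 = e0 + e(A, C) and a (|C| - 1) <= e(A, C) <= a |C|.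
   Upper bound (Collatz-Wielandt): for mu = s + e0/a + c/s, the positive vector equal to 1
   on C and to ((|C| + 1)/mu) (1 + d_A(t)/mu + 2 a^2/mu^2) at t in A satisfies
   (Adj u)_t <= mu u_t everywhere, so no eigenvalue has modulus larger than mu.
   Lower bound (Rayleigh quotient): the vector equal to s + d_A(t) on A and to a on C has
   quadratic form at least (s + e0/a - c/s) times its squared norm.
   Both comparisons reduce to polynomial inequalities in s, a, e0 that hold once
   c >= 4 a^2. *)

From HB Require Import structures.
From mathcomp Require Import all_boot all_order all_algebra all_field.
From mathcomp Require Import ring lra.
Import Order.TTheory GRing.Theory Num.Theory Num.Def.

Set Implicit Arguments.
Unset Strict Implicit.
Unset Printing Implicit Defensive.

Lemma bigID_setC (R : Type) (idx : R) (op : Monoid.com_law idx) (I : finType)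
    (A : {set I}) (F : I -> R) :
  \big[op/idx]_i F i = op (\big[op/idx]_(i in A) F i) (\big[op/idx]_(i in ~: A) F i).
Proof. by rewrite (bigID (mem A)) /=; congr (op _ _); apply: eq_bigl => i; rewrite inE. Qed.

Lemma sum_bool_le_card (T : finType) (A : {pred T}) (b : pred T) :
  (\sum_(v in A) b v <= #|A|)%N.
Proof. by rewrite -sum1_card; apply: leq_sum => v _; apply: leq_b1. Qed.

Lemma sum_bool_card (T : finType) (B : {set T}) : (\sum_v (v \in B) = #|B|)%N.
Proof. by rewrite -sum1_card [RHS]big_mkcond; apply: eq_bigr => v _; case: (v \in B). Qed.

Lemma set2_eq_cases (T : finType) (a b x y : T) :
  a != b -> [set a; b] = [set x; y] -> (a = x /\ b = y) \/ (a = y /\ b = x).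
Proof.
move=> ab Eab.
have /set2P xa : a \in [set x; y] by rewrite -Eab set21.
have /set2P yb : b \in [set x; y] by rewrite -Eab set22.
by move: ab; case: xa => ->; case: yb => ->; rewrite ?eqxx //; [left | right].
Qed.

Section Edges.
Variables (T : finType) (e : rel T).
Hypotheses (esym : symmetric e) (eirr : irreflexive e).

Lemma double_nedges_in (S : {set T}) :
  (nedges_in e S).*2 = \sum_(u in S) \sum_(v in S) e u v.
Proof.
rewrite pair_big /=.
rewrite (eq_bigr (fun q => if e q.1 q.2 then 1 else 0)%N) => [|q _]; last by case: e.
rewrite -big_mkcondr /=.
set ES := [set E in edges e | E \subset S].
rewrite (partition_big (fun q : T * T => [set q.1; q.2]) (mem ES)) /=; last first.
  move=> [x y] /= /andP[/andP[xS yS] exy]; rewrite !inE; apply/andP; split.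
    by apply/existsP; exists x; apply/existsP; exists y; rewrite exy eqxx.
  by apply/subsetP => z /set2P [->|->].
rewrite /nedges_in -/ES -muln2 -sum_nat_const; apply: eq_bigr => E.
rewrite !inE => /andP[/existsP[x /existsP[y /andP[exy /eqP ->]]] sS].
have xS : x \in S by apply: (subsetP sS); rewrite set21.
have yS : y \in S by apply: (subsetP sS); rewrite set22.
have xy : x != y by apply: contraTneq exy => ->; rewrite eirr.
rewrite sum1dep_card (_ : [set q | _] = [set (x, y); (y, x)]).
  have xy_yx : (x, y) != (y, x) by apply: contra xy => /eqP [->].
  by rewrite cards2 xy_yx.
apply/setP => -[a b]; rewrite !inE /=; apply/idP/idP.
  move=> /andP[/andP[/andP[aS bS] eab] /eqP Eab].
  have ab : a != b by apply: contraTneq eab => ->; rewrite eirr.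
  by case: (set2_eq_cases ab Eab) => -[-> ->]; rewrite eqxx ?orbT.
by case/orP => /eqP [-> ->]; rewrite xS yS /= ?exy ?eqxx // esym exy setUC eqxx.
Qed.

Lemma nedges_split (A : {set T}) :
  (forall x y, x \notin A -> y \notin A -> ~~ e x y) ->
  nedges e = (nedges_in e A + \sum_(u in A) \sum_(v in ~: A) e u v)%N.
Proof.
move=> indepC.
have nedgesT : nedges e = nedges_in e [set: T].
  by apply: eq_card => E; rewrite !inE subsetT andbT.
have sumT (F : T -> nat) : (\sum_(u in [set: T]) F u = \sum_u F u)%N.
  by apply: eq_bigl => u; rewrite inE.
apply: double_inj; rewrite doubleD nedgesT !double_nedges_in sumT.
rewrite (eq_bigr (fun u => \sum_(v in A) e u v + \sum_(v in ~: A) e u v)%N); last first.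
  by move=> u _; rewrite sumT (bigID_setC _ A).
rewrite big_split /= (bigID_setC _ A (fun u => \sum_(v in A) e u v)%N).
rewrite (bigID_setC _ A (fun u => \sum_(v in ~: A) e u v)%N).
rewrite [X in (_ + _ + (_ + X))%N]big1 ?addn0; last first.
  move=> u; rewrite inE => uA; apply: big1 => v; rewrite inE => vA.
  by rewrite (negbTE (indepC _ _ uA vA)).
rewrite exchange_big /= -addnn addnA; congr (_ + _ + _)%N.
by rewrite exchange_big; apply: eq_bigr => u _; apply: eq_bigr => v _; rewrite esym.
Qed.

Lemma card_setC_le_degree (A : {set T}) u :
  u \in A -> (#|[set x | (x \notin A) && ~~ [forall a in A, e x a]]| <= 1)%N ->
  (#|~: A| <= (\sum_(v in ~: A) e u v).+1)%N.
Proof.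
set B := [set x | _ & _] => uA cardB.
apply: (@leq_trans (\sum_(v in ~: A) (e u v + (v \in B)))%N).
  rewrite -sum1_card; apply: leq_sum => v; rewrite inE => vA.
  case vB: (v \in B); first by rewrite addn1.
  move: vB; rewrite inE vA => /negbFE/forallP/(_ u).
  by rewrite uA /= esym => ->.
rewrite big_split /= -addn1 leq_add2l; apply: leq_trans cardB.
rewrite -sum_bool_card [leqRHS](bigID_setC _ A) leq_addl //.
Qed.

End Edges.

Local Open Scope ring_scope.

Lemma sum_enum_val (T : finType) (R : Type) (idx : R) (op : Monoid.com_law idx)
    (F : T -> R) :
  \big[op/idx]_t F t = \big[op/idx]_(i < #|T|) F (enum_val i).
Proof. by rewrite -big_enum_val; apply: eq_bigl. Qed.

Lemma exists_real_argmax (I : finType) (i0 : I) (F : I -> algC) :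
  (forall i, F i \is Creal) -> exists i, forall j, F j <= F i.
Proof.
move=> FR; pose G i : algR := in_algR (FR i).
case: (@arg_maxP _ algR I i0 predT G) => // i _ Gi.
by exists i => j; have := Gi j isT.
Qed.

Lemma adjmx_hermsym (T : finType) (e : rel T) : symmetric e -> adjmx e \is hermsymmx.
Proof.
move=> esym; apply/is_hermitianmxP; rewrite expr0 scale1r.
by apply/matrixP => i j; rewrite !mxE conjC_nat esym.
Qed.

Lemma adjmx_eigenvector (T : finType) (e : rel T) (z : algC) :
  symmetric e -> eigenvalue (adjmx e) z ->
  exists2 f : T -> algC, (exists t, f t != 0) &
    forall t, z * f t = \sum_t' (e t t')%:R * f t'.
Proof.
move=> esym /eigenvalueP [v zv v_neq0].
exists (fun t => v 0 (enum_rank t)).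
  have [i vi_neq0] : exists i, v 0 i != 0.
    apply/existsP; apply: contraR v_neq0 => /existsPn v0.
    by apply/eqP/rowP => i; rewrite mxE; apply/eqP/negPn/v0.
  by exists (enum_val i); rewrite enum_valK.
move=> t; move/rowP: zv => /(_ (enum_rank t)); rewrite !mxE => <-.
rewrite [RHS]sum_enum_val; apply: eq_bigr => i _.
by rewrite enum_valK !mxE enum_rankK esym mulrC.
Qed.

(* Collatz-Wielandt: evaluate the eigenvalue equation at a vertex maximising [|f t| / u t]. *)
Lemma adjmx_eigenvalue_le (T : finType) (e : rel T) (u : T -> algC) (mu : algC) :
  symmetric e -> (forall t, 0 < u t) ->
  (forall t, \sum_t' (e t t')%:R * u t' <= mu * u t) ->
  forall z, eigenvalue (adjmx e) z -> `|z| <= mu.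
Proof.
move=> esym u_gt0 Au_le z /(adjmx_eigenvector esym) [f [t0 ft0] zf].
pose ratio t := `|f t| / u t.
have ratioR t : ratio t \is Creal by rewrite rpredM ?normr_real // rpredV gtr0_real.
have [tm ratio_max] := exists_real_argmax t0 ratioR.
set rho := ratio tm in ratio_max.
have rho_gt0 : 0 < rho.
  by apply: lt_le_trans (ratio_max t0); rewrite divr_gt0 ?normr_gt0.
have f_le t : `|f t| <= rho * u t by have := ratio_max t; rewrite ler_pdivrMr.
have f_tm : `|f tm| = rho * u tm by rewrite divfK ?gt_eqF.
have f_tm_gt0 : 0 < `|f tm| by rewrite f_tm mulr_gt0.
rewrite -(ler_pM2r f_tm_gt0) -normrM zf.
apply: le_trans (ler_norm_sum _ _ _) _.
apply: le_trans (_ : \sum_t' (e tm t')%:R * (rho * u t') <= _).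
  apply: ler_sum => t' _; rewrite normrM normr_nat.
  by apply: ler_wpM2l; [exact: ler0n | exact: f_le].
under eq_bigr => t' _ do rewrite mulrCA.
by rewrite -mulr_sumr f_tm mulrCA; apply: ler_wpM2l; [exact: ltW | exact: Au_le].
Qed.

Lemma spectral_diag_eigenvalue (C : numClosedFieldType) (n : nat) (M : 'M[C]_n) k :
  M \is normalmx -> eigenvalue M (spectral_diag M 0 k).
Proof.
move=> /orthomx_spectralP M_eq.
set P := spectralmx M in M_eq.
have P_invK : P *m invmx P = 1%:M by rewrite mulmxV ?spectral_unit.
apply/eigenvalueP; exists (row k P).
  rewrite -row_mul {1}M_eq !mulmxA P_invK mul1mx mul_diag_mx.
  by apply/rowP => j; rewrite !mxE.
apply/eqP => /rowP Pk0.
have := congr1 (fun B : 'M_n => B k k) P_invK; rewrite !mxE eqxx big1 => [/eqP|j _].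
  by rewrite eq_sym oner_eq0.
by have := Pk0 j; rewrite !mxE => ->; rewrite mul0r.
Qed.

(* Diagonalise [M] by a unitary matrix: the form becomes [\sum_k D_k |y_k|^2], each [D_k <= r]. *)
Lemma hermitian_form_le (n : nat) (M : 'M[algC]_n) (x : 'rV[algC]_n) (r : algC) :
  M \is hermsymmx -> (forall i, x 0 i \is Creal) ->
  (forall z, eigenvalue M z -> `|z| <= r) ->
  (x *m M *m x^T) 0 0 <= r * (x *m x^T) 0 0.
Proof.
move=> Mh xR r_ge.
have /orthomx_spectralP := hermitian_normalmx Mh.
set P := spectralmx M; set D := spectral_diag M => M_eq.
set Pc := map_mx conjC P^T.
have PPc : P *m Pc = 1%:M by apply/unitarymxP/spectral_unitarymx.
have PcP : Pc *m P = 1%:M by apply: mulmx1C.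
have {}M_eq : M = Pc *m diag_mx D *m P by rewrite M_eq invmx_unitary ?spectral_unitarymx.
have D_le k : D 0 k <= r.
  have DR : D 0 k \is Creal by have /mxOverP := hermitian_spectral_diag_real Mh; apply.
  apply: le_trans (real_ler_norm DR) _.
  exact/r_ge/spectral_diag_eigenvalue/hermitian_normalmx.
set y := x *m Pc.
have Px : P *m x^T = map_mx conjC y^T.
  apply/matrixP => k i; rewrite !ord1 !mxE rmorph_sum; apply: eq_bigr => j _.
  by rewrite !mxE rmorphM /= conjCK (conj_Creal (xR j)) mulrC.
have diag_form (d : 'rV[algC]_n) :
    (y *m diag_mx d *m map_mx conjC y^T) 0 0 = \sum_k d 0 k * `|y 0 k| ^+ 2.
  by rewrite mul_mx_diag mxE; apply: eq_bigr => k _; rewrite !mxE normCK mulrAC mulrC.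
have -> : (x *m M *m x^T) 0 0 = \sum_k D 0 k * `|y 0 k| ^+ 2.
  by rewrite M_eq !mulmxA -/y -(mulmxA _ P) Px diag_form.
have -> : (x *m x^T) 0 0 = \sum_k `|y 0 k| ^+ 2.
  have -> : x *m x^T = y *m (P *m x^T) by rewrite /y -mulmxA (mulmxA Pc) PcP mul1mx.
  rewrite Px -[y in y *m _]mulmx1 -diag_const_mx diag_form.
  by apply: eq_bigr => k _; rewrite mxE mul1r.
by rewrite mulr_sumr; apply: ler_sum => k _; rewrite ler_wpM2r ?exprn_ge0.
Qed.

Lemma adjmx_form_le (T : finType) (e : rel T) (x : T -> algC) (r : algC) :
  symmetric e -> (forall t, x t \is Creal) ->
  (forall z, eigenvalue (adjmx e) z -> `|z| <= r) ->
  \sum_u \sum_v (e u v)%:R * (x u * x v) <= r * \sum_u x u ^+ 2.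
Proof.
move=> esym xR r_ge.
pose xv := \row_i x (enum_val i) : 'rV[algC]_#|T|.
have := @hermitian_form_le _ (adjmx e) xv r (adjmx_hermsym esym) _ r_ge.
have -> : (xv *m adjmx e *m xv^T) 0 0 = \sum_u \sum_v (e u v)%:R * (x u * x v).
  rewrite mxE; under eq_bigr => j _ do rewrite !mxE mulr_suml.
  rewrite exchange_big /= [RHS]sum_enum_val; apply: eq_bigr => i _.
  by rewrite [RHS]sum_enum_val; apply: eq_bigr => j _; rewrite !mxE mulrCA mulrA.
have -> : (xv *m xv^T) 0 0 = \sum_u x u ^+ 2.
  by rewrite mxE [RHS]sum_enum_val; apply: eq_bigr => i _; rewrite !mxE expr2.
by apply => i; rewrite mxE.
Qed.

Section Arithmetic.
Variable R : realFieldType.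

Lemma expr_ge1_chain (a : R) :
  1 <= a -> [/\ a <= a ^+ 2, a ^+ 2 <= a ^+ 3 & a ^+ 3 <= a ^+ 4].
Proof. by move=> a_ge1; split; rewrite ?(ler_weXn2l a_ge1) // -[leLHS]expr1 ler_weXn2l. Qed.

Lemma rayleigh_quotient_arith (s a e0 q N X c r : R) :
  0 < s -> 1 <= a -> 0 <= e0 -> 2 * e0 <= a ^+ 2 -> 4 * a ^+ 2 <= c ->
  0 <= q -> q <= a ^+ 3 -> s ^+ 2 = e0 + X -> 0 <= X -> a * N <= X + a -> X <= a * N ->
  2 * e0 * s ^+ 2 + 2 * s * q + 2 * a * (N - 1) * (a * s + 2 * e0)
    <= r * (a * s ^+ 2 + 4 * e0 * s + q + a ^+ 2 * N) ->
  s + e0 / a - c / s <= r.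
Proof.
move=> s_gt0 a_ge1 e0_ge0 e0_le c_ge q_ge0 q_le sX X_ge0 NX XN Q_le.
have a_gt0 : 0 < a by lra.
have a_ge0 : 0 <= a by lra.
have s_ge0 : 0 <= s by lra.
have [a12 a23 a34] := expr_ge1_chain a_ge1.
have a2_ge0 : 0 <= a ^+ 2 by rewrite exprn_ge0.
have c_ge0 : 0 <= c by lra.
set th := a * N - X.
have th_ge0 : 0 <= th by rewrite /th; lra.
have e0_sq : 2 * e0 * (2 * e0) <= a ^+ 2 * a ^+ 2 by apply: ler_pM; rewrite ?mulr_ge0.
have a2e0 : a ^+ 2 * (2 * e0) <= a ^+ 2 * a ^+ 2 by apply: ler_wpM2l.
have ae0 : a * (2 * e0) <= a * a ^+ 2 by apply: ler_wpM2l.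
have a2c : a ^+ 2 * (4 * a ^+ 2) <= a ^+ 2 * c by apply: ler_wpM2l.
have ac : a * (4 * a ^+ 2) <= a * c by apply: ler_wpM2l.
have aq : 0 <= a * q by rewrite mulr_ge0.
have ath : 0 <= a * th by rewrite mulr_ge0.
have a2th : 0 <= a ^+ 2 * th by rewrite mulr_ge0.
(* Multiplying out by [a s], the claim becomes [0 <= s^2 P2 + s e0 P1 + a c P0]. *)
pose P2 := a * q + a ^+ 2 * (th - e0) - 2 * a ^+ 3 - 4 * e0 ^+ 2 + 2 * a ^+ 2 * c.
pose P1 := 3 * a * th - 3 * a * e0 - 4 * a ^+ 2 - q + 4 * a * c.
pose P0 := q + a * th - a * e0.
have P2_ge : a ^+ 2 * c <= P2 by rewrite /P2; lra.
have P1_ge0 : 0 <= P1 by rewrite /P1; lra.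
have key : a * s * (2 * e0 * s ^+ 2 + 2 * s * q + 2 * a * (N - 1) * (a * s + 2 * e0))
    - (a * s ^+ 2 + e0 * s - a * c) * (a * s ^+ 2 + 4 * e0 * s + q + a ^+ 2 * N)
    = s ^+ 2 * P2 + s * e0 * P1 + a * c * P0.
  by rewrite /P2 /P1 /P0 /th (_ : X = s ^+ 2 - e0); [ring | lra].
have gap_ge0 : 0 <= s ^+ 2 * P2 + s * e0 * P1 + a * c * P0.
  have := ler_wpM2l (exprn_ge0 2 s_ge0) P2_ge.
  have : 0 <= s * e0 * P1 by rewrite !mulr_ge0.
  have : 0 <= a * c * (q + a * th) by rewrite !mulr_ge0 ?addr_ge0.
  have : 0 <= a ^+ 2 * c * X by rewrite !mulr_ge0.
  have : s ^+ 2 * (a ^+ 2 * c) = a ^+ 2 * c * e0 + a ^+ 2 * c * X by rewrite sX; ring.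
  rewrite /P0; lra.
have norm_gt0 : 0 < a * s ^+ 2 + 4 * e0 * s + q + a ^+ 2 * N.
  have : 0 < a * s ^+ 2 by rewrite mulr_gt0 ?exprn_gt0.
  have : 0 <= e0 * s by rewrite mulr_ge0.
  have : 0 <= a * (a * N) by rewrite mulr_ge0 //; lra.
  lra.
rewrite -(ler_pM2r norm_gt0); apply: le_trans Q_le.
have -> : s + e0 / a - c / s = (a * s ^+ 2 + e0 * s - a * c) / (a * s).
  by field; rewrite !gt_eqF.
by rewrite mulrAC ler_pdivrMr ?mulr_gt0 //; lra.
Qed.

Lemma collatz_rowC_arith (s a e0 N X c : R) :
  0 < s -> 1 <= a -> 0 <= e0 -> 2 * e0 <= a ^+ 2 -> 4 * a ^+ 2 <= c ->
  s ^+ 2 = e0 + X -> a * N <= X + 2 * a ->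
  let mu := s + e0 / a + c / s in
  2 * a <= mu /\ N / mu * (a + 2 * e0 / mu + a * (2 * a ^+ 2) / mu ^+ 2) <= mu.
Proof.
move=> s_gt0 a_ge1 e0_ge0 e0_le c_ge sX NX.
have a_gt0 : 0 < a by lra.
have a_ge0 : 0 <= a by lra.
have s_ge0 : 0 <= s by lra.
have [a12 _ _] := expr_ge1_chain a_ge1.
have a2_ge0 : 0 <= a ^+ 2 by rewrite exprn_ge0.
set f := e0 / a; set g := c / s => mu.
have e0f : e0 = a * f by rewrite /f mulrC divfK ?gt_eqF.
have f_ge0 : 0 <= f by rewrite divr_ge0.
have f_le : 2 * f <= a by rewrite -(ler_pM2l a_gt0) mulrCA -e0f; lra.
have sg : s * g = c by rewrite /g mulrC divfK ?gt_eqF.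
have g_ge0 : 0 <= g by rewrite divr_ge0 //; lra.
have sf : 0 <= s * f by rewrite mulr_ge0.
have mu_sq : s ^+ 2 + 2 * s * f + 2 * c <= mu ^+ 2.
  have -> : mu ^+ 2 = s ^+ 2 + 2 * s * f + 2 * (s * g) + (f ^+ 2 + g ^+ 2 + 2 * f * g).
    by rewrite /mu; ring.
  have := mulr_ge0 f_ge0 g_ge0; have := sqr_ge0 f; have := sqr_ge0 g.
  rewrite sg; lra.
have mu_ge0 : 0 <= mu by rewrite /mu; lra.
have mu_ge : 2 * a <= mu.
  rewrite -(ler_pXn2r (n := 2)) ?nnegrE ?mulr_ge0 //.
  by have := sqr_ge0 s; lra.
have mu_gt0 : 0 < mu by lra.
have s_le : s <= mu by rewrite /mu; lra.
split=> //.
have -> : N / mu * (a + 2 * e0 / mu + a * (2 * a ^+ 2) / mu ^+ 2)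
    = N * a * (mu ^+ 2 + 2 * f * mu + 2 * a ^+ 2) / mu ^+ 3.
  by rewrite e0f; field; rewrite gt_eqF.
rewrite ler_pdivrMr ?exprn_gt0 //.
set L := s ^+ 2 - a * f + 2 * a.
have NL : N * a <= L by rewrite /L -e0f; lra.
have af : 0 <= a * f by rewrite mulr_ge0.
have W_ge0 : 0 <= mu ^+ 2 + 2 * f * mu + 2 * a ^+ 2.
  by have := mulr_ge0 f_ge0 mu_ge0; have := sqr_ge0 mu; lra.
have NLW := ler_wpM2r W_ge0 NL.
have muL : mu * L <= mu ^+ 2 * s + mu ^+ 2.
  have := ler_wpM2l (mulr_ge0 mu_ge0 s_ge0) s_le.
  have := ler_wpM2r mu_ge0 mu_ge.
  have : 0 <= mu * (a * f) by rewrite mulr_ge0.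
  rewrite /L; lra.
have fmuL := ler_wpM2l (mulr_ge0 (ler0n _ 2) f_ge0) muL.
have a2L : 2 * a ^+ 2 * L <= 2 * a ^+ 2 * mu ^+ 2 + a * mu ^+ 2.
  have := ler_wpM2l a2_ge0 (ler_pM s_ge0 s_ge0 s_le s_le).
  have two_a_ge0 := mulr_ge0 (ler0n _ 2) a_ge0.
  have := ler_wpM2l a_ge0 (ler_pM two_a_ge0 two_a_ge0 mu_ge mu_ge).
  have : 0 <= a ^+ 2 * (a * f) by rewrite mulr_ge0.
  rewrite /L; lra.
have sum_le : L + 2 * f * s + 2 * f + 2 * a ^+ 2 + a <= mu ^+ 2 by rewrite /L; lra.
have := ler_wpM2l (exprn_ge0 2 mu_ge0) sum_le.
have -> : mu * mu ^+ 3 = mu ^+ 2 * mu ^+ 2 by ring.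
have : L * (mu ^+ 2 + 2 * f * mu + 2 * a ^+ 2)
    = L * mu ^+ 2 + 2 * f * (mu * L) + 2 * a ^+ 2 * L by ring.
lra.
Qed.

Lemma collatz_rowA_arith (al mu a D S1 cc : R) :
  0 <= al -> 0 < mu -> 2 * a <= mu -> 0 <= a -> D <= a -> S1 <= a ^+ 2 ->
  cc <= al * mu ->
  al * (D + S1 / mu + D * (2 * a ^+ 2) / mu ^+ 2) + cc
    <= mu * (al * (1 + D / mu + 2 * a ^+ 2 / mu ^+ 2)).
Proof.
move=> al_ge0 mu_gt0 mu_ge a_ge0 D_le S1_le cc_le.
have a2_ge0 : 0 <= a ^+ 2 by rewrite exprn_ge0.
have key : S1 / mu + D * (2 * a ^+ 2) / mu ^+ 2 <= 2 * a ^+ 2 / mu.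
  have -> : S1 / mu + D * (2 * a ^+ 2) / mu ^+ 2 = (S1 * mu + D * (2 * a ^+ 2)) / mu ^+ 2.
    by field; rewrite gt_eqF.
  have -> : 2 * a ^+ 2 / mu = 2 * a ^+ 2 * mu / mu ^+ 2 by field; rewrite gt_eqF.
  rewrite ler_pM2r ?invr_gt0 ?exprn_gt0 //.
  have := ler_wpM2r (ltW mu_gt0) S1_le.
  have := ler_wpM2r (mulr_ge0 (ler0n _ 2) a2_ge0) D_le.
  have := ler_wpM2l a2_ge0 mu_ge.
  lra.
have -> : mu * (al * (1 + D / mu + 2 * a ^+ 2 / mu ^+ 2))
    = al * mu + al * D + al * (2 * a ^+ 2 / mu) by field; rewrite gt_eqF.
have := ler_wpM2l al_ge0 key.
have -> : al * (D + S1 / mu + D * (2 * a ^+ 2) / mu ^+ 2)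
    = al * D + al * (S1 / mu + D * (2 * a ^+ 2) / mu ^+ 2) by ring.
lra.
Qed.

End Arithmetic.

(* The arithmetic is done in [algR], the real subfield of [algC], where [lra] applies. *)
Lemma rayleigh_quotient_arithC (s a e0 q N X c r : algC) :
  s \is Creal -> a \is Creal -> e0 \is Creal -> q \is Creal -> N \is Creal ->
  X \is Creal -> c \is Creal -> r \is Creal ->
  0 < s -> 1 <= a -> 0 <= e0 -> 2 * e0 <= a ^+ 2 -> 4 * a ^+ 2 <= c ->
  0 <= q -> q <= a ^+ 3 -> s ^+ 2 = e0 + X -> 0 <= X -> a * N <= X + a -> X <= a * N ->
  2 * e0 * s ^+ 2 + 2 * s * q + 2 * a * (N - 1) * (a * s + 2 * e0)
    <= r * (a * s ^+ 2 + 4 * e0 * s + q + a ^+ 2 * N) ->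
  s + e0 / a - c / s <= r.
Proof.
move=> sR aR e0R qR NR XR cR rR s_gt0 a_ge1 e0_ge0 e0_le c_ge q_ge0 q_le sX.
exact: (@rayleigh_quotient_arith algR (in_algR sR) (in_algR aR) (in_algR e0R) (in_algR qR)
  (in_algR NR) (in_algR XR) (in_algR cR) (in_algR rR) s_gt0 a_ge1 e0_ge0 e0_le c_ge
  q_ge0 q_le
  (@val_inj _ _ _ (in_algR sR ^+ 2) (in_algR e0R + in_algR XR) sX)).
Qed.

Lemma collatz_rowC_arithC (s a e0 N X c : algC) :
  s \is Creal -> a \is Creal -> e0 \is Creal -> N \is Creal -> X \is Creal ->
  c \is Creal ->
  0 < s -> 1 <= a -> 0 <= e0 -> 2 * e0 <= a ^+ 2 -> 4 * a ^+ 2 <= c ->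
  s ^+ 2 = e0 + X -> a * N <= X + 2 * a ->
  let mu := s + e0 / a + c / s in
  2 * a <= mu /\ N / mu * (a + 2 * e0 / mu + a * (2 * a ^+ 2) / mu ^+ 2) <= mu.
Proof.
move=> sR aR e0R NR XR cR s_gt0 a_ge1 e0_ge0 e0_le c_ge sX.
exact: (@collatz_rowC_arith algR (in_algR sR) (in_algR aR) (in_algR e0R) (in_algR NR)
  (in_algR XR) (in_algR cR) s_gt0 a_ge1 e0_ge0 e0_le c_ge
  (@val_inj _ _ _ (in_algR sR ^+ 2) (in_algR e0R + in_algR XR) sX)).
Qed.

Lemma collatz_rowA_arithC (al mu a D S1 cc : algC) :
  al \is Creal -> mu \is Creal -> a \is Creal -> D \is Creal -> S1 \is Creal ->
  cc \is Creal ->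
  0 <= al -> 0 < mu -> 2 * a <= mu -> 0 <= a -> D <= a -> S1 <= a ^+ 2 ->
  cc <= al * mu ->
  al * (D + S1 / mu + D * (2 * a ^+ 2) / mu ^+ 2) + cc
    <= mu * (al * (1 + D / mu + 2 * a ^+ 2 / mu ^+ 2)).
Proof.
move=> alR muR aR DR S1R ccR.
exact: (@collatz_rowA_arith algR (in_algR alR) (in_algR muR) (in_algR aR) (in_algR DR)
  (in_algR S1R) (in_algR ccR)).
Qed.

Section SplitGraph.
Variables (T : finType) (e : rel T) (A : {set T}).
Hypotheses (esym : symmetric e) (eirr : irreflexive e).
Hypothesis indepC : forall x y, x \notin A -> y \notin A -> ~~ e x y.
Hypothesis almost_complete :
  (#|[set x | (x \notin A) && ~~ [forall a in A, e x a]]| <= 1)%N.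

Let degA u := (\sum_(v in A) e u v)%N.
Let degC u := (\sum_(v in ~: A) e u v)%N.
Let ncross := (\sum_(u in A) degC u)%N.
Let sqdeg := (\sum_(u in A) degA u ^ 2)%N.
Let N := #|~: A|.
Let a : algC := #|A|%:R.
Let e0 : algC := (nedges_in e A)%:R.

Lemma sum_degA : (\sum_(u in A) degA u)%N = (nedges_in e A).*2.
Proof. by rewrite double_nedges_in. Qed.

Lemma degC_ge u : u \in A -> (N <= (degC u).+1)%N.
Proof. by move=> uA; apply: card_setC_le_degree. Qed.

Lemma ncross_le : (ncross <= #|A| * N)%N.
Proof. by rewrite -sum_nat_const; apply: leq_sum => u _; apply: sum_bool_le_card. Qed.

Lemma ncross_ge : (#|A| * N <= ncross + #|A|)%N.
Proof.
rewrite -sum_nat_const -sum1_card -big_split /=.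
by apply: leq_sum => u uA; rewrite addn1; apply: degC_ge.
Qed.

Lemma double_nedges_in_le : ((nedges_in e A).*2 <= #|A| * #|A|)%N.
Proof.
by rewrite -sum_degA -sum_nat_const; apply: leq_sum => u _; apply: sum_bool_le_card.
Qed.

Lemma sqdeg_le : (sqdeg <= #|A| ^ 3)%N.
Proof.
rewrite (expnS _ 2) -sum_nat_const; apply: leq_sum => u _.
by rewrite leq_exp2r //; apply: sum_bool_le_card.
Qed.

Lemma card_gt0_of_nedges : (0 < nedges e)%N -> (0 < #|A|)%N.
Proof.
rewrite (nedges_split esym eirr indepC) !lt0n; apply: contra_neq => A0.
have := double_nedges_in_le; have := ncross_le.
by rewrite A0 mul0n !leqn0 double_eq0 => /eqP X0 /eqP ->; rewrite add0n; exact: X0.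
Qed.

Let test_vector (mu : algC) (t : T) : algC :=
  if t \in A then N.+1%:R / mu * (1 + (degA t)%:R / mu + 2 * a ^+ 2 / mu ^+ 2) else 1.

Lemma test_vector_gt0 mu t : 0 < mu -> 0 < test_vector mu t.
Proof.
move=> mu_gt0; rewrite /test_vector; case: ifP => // _.
rewrite mulr_gt0 ?divr_gt0 ?ltr0Sn // -addrA ltr_wpDr ?addr_ge0 ?divr_ge0 //.
- by rewrite ltW.
- by rewrite mulr_ge0 ?exprn_ge0.
- by rewrite exprn_ge0 ?ltW.
Qed.

Lemma test_vector_rowA mu t : t \in A -> 0 < mu -> 2 * a <= mu ->
  \sum_t' (e t t')%:R * test_vector mu t' <= mu * test_vector mu t.
Proof.
move=> tA mu_gt0 mu_ge; set al := N.+1%:R / mu.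
have al_mu : al * mu = N.+1%:R by rewrite divfK ?gt_eqF.
have rowA : \sum_(t' in A) (e t t')%:R * test_vector mu t' = al * ((degA t)%:R
    + (\sum_(t' in A) e t t' * degA t')%N%:R / mu + (degA t)%:R * (2 * a ^+ 2) / mu ^+ 2).
  rewrite (eq_bigr (fun t' => al * (e t t')%:R + al / mu * (e t t' * degA t')%N%:R
      + al * (2 * a ^+ 2) / mu ^+ 2 * (e t t')%:R)); last first.
    by move=> t' t'A; rewrite /test_vector t'A -/al natrM; field; rewrite gt_eqF.
  by rewrite !big_split /= -!mulr_sumr -!natr_sum; field; rewrite gt_eqF.
have rowC : \sum_(t' in ~: A) (e t t')%:R * test_vector mu t' = (degC t)%:R.
  rewrite natr_sum; apply: eq_bigr => t'; rewrite inE /test_vector => /negbTE ->.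
  by rewrite mulr1.
rewrite (bigID_setC _ A) rowA rowC /test_vector tA.
have al_ge0 : 0 <= al by rewrite divr_ge0 ?ltW.
apply: collatz_rowA_arithC => //.
- exact: ger0_real.
- exact: gtr0_real.
- exact: realn.
- by rewrite ler_nat sum_bool_le_card.
- rewrite expr2 -natrM ler_nat -sum_nat_const; apply: leq_sum => t' _.
  by case: (e t t'); rewrite ?mul1n ?mul0n ?sum_bool_le_card.
- by rewrite al_mu ler_nat (leq_trans (sum_bool_le_card _ _)).
Qed.

Lemma test_vector_rowC mu t : t \notin A -> 0 < mu ->
  N.+1%:R / mu * (a + 2 * e0 / mu + a * (2 * a ^+ 2) / mu ^+ 2) <= mu ->
  \sum_t' (e t t')%:R * test_vector mu t' <= mu * test_vector mu t.
Proof.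
move=> tA mu_gt0 mu_ge; set al := N.+1%:R / mu.
have rowC : \sum_(t' in ~: A) (e t t')%:R * test_vector mu t' = 0.
  apply: big1 => t'; rewrite inE => t'A.
  by rewrite (negbTE (indepC tA t'A)) mul0r.
have rowA : \sum_(t' in A) (e t t')%:R * test_vector mu t'
    <= \sum_(t' in A) test_vector mu t'.
  apply: ler_sum => t' _; case: (e t t'); rewrite ?mul1r ?mul0r //.
  exact/ltW/test_vector_gt0.
have sumA : \sum_(t' in A) test_vector mu t'
    = al * (a + 2 * e0 / mu + a * (2 * a ^+ 2) / mu ^+ 2).
  rewrite (eq_bigr (fun t' => al + al / mu * (degA t')%:R + al * (2 * a ^+ 2) / mu ^+ 2));
    last by move=> t' t'A; rewrite /test_vector t'A -/al; field; rewrite gt_eqF.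
  rewrite !big_split /= -(mulr_sumr _ _ (fun i => (degA i)%:R) (al / mu)) !sumr_const.
  rewrite -natr_sum sum_degA -addnn natrD -(mulr_natr al).
  by rewrite -(mulr_natr (al * (2 * a ^+ 2) / mu ^+ 2)); field; rewrite gt_eqF.
rewrite (bigID_setC _ A) /= rowC addr0 /test_vector (negbTE tA) mulr1.
by apply: le_trans rowA _; rewrite sumA.
Qed.

Lemma eigenvalue_le_test mu : 0 < mu -> 2 * a <= mu ->
  N.+1%:R / mu * (a + 2 * e0 / mu + a * (2 * a ^+ 2) / mu ^+ 2) <= mu ->
  forall z, eigenvalue (adjmx e) z -> `|z| <= mu.
Proof.
move=> mu_gt0 mu_ge rowC_le; apply: (adjmx_eigenvalue_le esym (u := test_vector mu)).
  by move=> t; apply: test_vector_gt0.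
move=> t; case: (boolP (t \in A)) => tA.
  exact: test_vector_rowA.
exact: test_vector_rowC.
Qed.

Let rayleigh_vector (s : algC) (t : T) : algC := if t \in A then s + (degA t)%:R else a.

Lemma rayleigh_vector_real s : s \is Creal -> forall t, rayleigh_vector s t \is Creal.
Proof. by move=> sR t; rewrite /rayleigh_vector; case: ifP; rewrite ?rpredD ?realn. Qed.

Lemma rayleigh_vector_norm s :
  \sum_t rayleigh_vector s t ^+ 2 = a * s ^+ 2 + 4 * e0 * s + sqdeg%:R + a ^+ 2 * N%:R.
Proof.
rewrite (bigID_setC _ A) /=.
rewrite (eq_bigr (fun u => s ^+ 2 + 2 * s * (degA u)%:R + (degA u ^ 2)%N%:R)); last first.
  by move=> u uA; rewrite /rayleigh_vector uA natrX; ring.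
rewrite [X in _ + X](eq_bigr (fun _ => a ^+ 2)); last first.
  by move=> u; rewrite inE /rayleigh_vector => /negbTE ->.
rewrite !big_split /= -(mulr_sumr _ _ (fun u => (degA u)%:R) (2 * s)) !sumr_const.
rewrite -!natr_sum sum_degA -addnn natrD -/e0 -/sqdeg -/N.
by rewrite -(mulr_natr (s ^+ 2)) -(mulr_natr (a ^+ 2)) -/a; ring.
Qed.

Lemma rayleigh_form_AA s : 0 <= s ->
  2 * e0 * s ^+ 2 + 2 * s * sqdeg%:R
    <= \sum_(u in A) \sum_(v in A) (e u v)%:R * (rayleigh_vector s u * rayleigh_vector s v).
Proof.
move=> s_ge0.
have sqdeg_l : (\sum_(u in A) \sum_(v in A) e u v * degA u)%N = sqdeg.
  by apply: eq_bigr => u _; rewrite -big_distrl /= -/(degA u) expnS expn1.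
have sqdeg_r : (\sum_(u in A) \sum_(v in A) e u v * degA v)%N = sqdeg.
  rewrite exchange_big; apply: eq_bigr => v _.
  rewrite (eq_bigr (fun u => e v u * degA v)%N) => [|u _]; last by rewrite esym.
  by rewrite -big_distrl /= -/(degA v) expnS expn1.
pose G u v := s ^+ 2 * (e u v)%:R + s * (e u v * degA u)%N%:R + s * (e u v * degA v)%N%:R.
have -> : 2 * e0 * s ^+ 2 + 2 * s * sqdeg%:R = \sum_(u in A) \sum_(v in A) G u v.
  transitivity (s ^+ 2 * (\sum_(u in A) \sum_(v in A) e u v)%N%:R
      + s * (\sum_(u in A) \sum_(v in A) e u v * degA u)%N%:R
      + s * (\sum_(u in A) \sum_(v in A) e u v * degA v)%N%:R).
    by rewrite -double_nedges_in // sqdeg_l sqdeg_r -addnn natrD -/e0; ring.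
  rewrite !natr_sum !mulr_sumr -!big_split; apply: eq_bigr => u _.
  by rewrite !natr_sum !mulr_sumr -!big_split.
apply: ler_sum => u uA; apply: ler_sum => v vA.
rewrite /G /rayleigh_vector uA vA; case: (e u v); rewrite ?mul0n ?mulr0 ?mul0r ?addr0 //.
rewrite !mul1n mul1r mulr1.
have -> : (s + (degA u)%:R) * (s + (degA v)%:R)
    = s ^+ 2 + s * (degA u)%:R + s * (degA v)%:R + (degA u)%:R * (degA v)%:R by ring.
by rewrite lerDl mulr_ge0.
Qed.

Lemma rayleigh_form_AC s : 0 <= s ->
  (N%:R - 1) * a * (a * s + 2 * e0)
    <= \sum_(u in A) \sum_(v in ~: A)
         (e u v)%:R * (rayleigh_vector s u * rayleigh_vector s v).
Proof.
move=> s_ge0.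
have -> : \sum_(u in A) \sum_(v in ~: A)
      (e u v)%:R * (rayleigh_vector s u * rayleigh_vector s v)
    = \sum_(u in A) (degC u)%:R * ((s + (degA u)%:R) * a).
  apply: eq_bigr => u uA; rewrite natr_sum mulr_suml; apply: eq_bigr => v.
  by rewrite inE /rayleigh_vector uA => /negbTE ->.
have -> : (N%:R - 1) * a * (a * s + 2 * e0)
    = \sum_(u in A) (N%:R - 1) * ((s + (degA u)%:R) * a).
  rewrite -mulr_sumr -mulr_suml big_split /= sumr_const -natr_sum sum_degA.
  by rewrite -addnn natrD -/e0 -(mulr_natr s) -/a; ring.
apply: ler_sum => u uA; apply: ler_wpM2r; first by rewrite mulr_ge0 ?addr_ge0.
by rewrite lerBlDr natr1 ler_nat degC_ge.
Qed.

Lemma rayleigh_form_ge s : 0 <= s ->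
  2 * e0 * s ^+ 2 + 2 * s * sqdeg%:R + 2 * a * (N%:R - 1) * (a * s + 2 * e0)
    <= \sum_u \sum_v (e u v)%:R * (rayleigh_vector s u * rayleigh_vector s v).
Proof.
move=> s_ge0.
pose F u v := (e u v)%:R * (rayleigh_vector s u * rayleigh_vector s v).
have blocks : \sum_u \sum_v F u v
    = \sum_(u in A) \sum_(v in A) F u v + \sum_(u in A) \sum_(v in ~: A) F u v
    + (\sum_(u in ~: A) \sum_(v in A) F u v + \sum_(u in ~: A) \sum_(v in ~: A) F u v).
  rewrite (bigID_setC _ A) /= -!big_split /=.
  by congr (_ + _); apply: eq_bigr => u _; rewrite (bigID_setC _ A).
have CC : \sum_(u in ~: A) \sum_(v in ~: A) F u v = 0.
  apply: big1 => u; rewrite inE => uA; apply: big1 => v; rewrite inE => vA.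
  by rewrite /F (negbTE (indepC uA vA)) mul0r.
have CA : \sum_(u in ~: A) \sum_(v in A) F u v = \sum_(u in A) \sum_(v in ~: A) F u v.
  rewrite exchange_big; apply: eq_bigr => u _; apply: eq_bigr => v _.
  by rewrite /F esym; congr (_ * _); rewrite mulrC.
rewrite -/F blocks CC CA addr0.
have AC_ge := rayleigh_form_AC s_ge0.
have := lerD (lerD (rayleigh_form_AA s_ge0) AC_ge) AC_ge.
by apply: le_trans; rewrite le_eqVlt; apply/orP; left; apply/eqP; ring.
Qed.

Let s : algC := sqrtC (nedges e)%:R.

Lemma split_graph_bounds : (0 < nedges e)%N ->
  [/\ 0 < s, 1 <= a, 2 * e0 <= a ^+ 2 & s ^+ 2 = e0 + ncross%:R].
Proof.
move=> m_gt0; split.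
- by rewrite sqrtC_gt0 ltr0n.
- by rewrite ler1n card_gt0_of_nedges.
- by rewrite -natrX -natrM ler_nat mul2n expnS expn1 double_nedges_in_le.
- by rewrite sqrtCK (nedges_split esym eirr indepC) natrD.
Qed.

Lemma spectral_radius_le (c : nat) : (0 < nedges e)%N -> (4 * #|A| ^ 2 <= c)%N ->
  forall z, eigenvalue (adjmx e) z -> `|z| <= s + e0 / a + c%:R / s.
Proof.
move=> m_gt0 c_ge; have [s_gt0 a_ge1 e0_le sX] := split_graph_bounds m_gt0.
have c_geC : 4 * a ^+ 2 <= c%:R by rewrite -natrX -natrM ler_nat.
have cross_le : a * N.+1%:R <= ncross%:R + 2 * a.
  rewrite -natrM -(natrM _ 2) -natrD ler_nat mulnS mul2n -addnn addnA.
  by rewrite [leqLHS]addnC leq_add2r ncross_ge.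
have sR : s \is Creal by rewrite gtr0_real.
have [mu_ge rowC_le] := collatz_rowC_arithC sR (realn _ _) (realn _ _) (realn _ _)
  (realn _ _) (realn _ _) s_gt0 a_ge1 (ler0n _ _) e0_le c_geC sX cross_le.
apply: eigenvalue_le_test => //.
by apply: lt_le_trans mu_ge; rewrite mulr_gt0 // (lt_le_trans ltr01).
Qed.

Lemma spectral_radius_ge (c : nat) (r : algC) :
  (0 < nedges e)%N -> (4 * #|A| ^ 2 <= c)%N -> r \is Creal ->
  (forall z, eigenvalue (adjmx e) z -> `|z| <= r) -> s + e0 / a - c%:R / s <= r.
Proof.
move=> m_gt0 c_ge rR r_ge; have [s_gt0 a_ge1 e0_le sX] := split_graph_bounds m_gt0.
have c_geC : 4 * a ^+ 2 <= c%:R by rewrite -natrX -natrM ler_nat.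
have sR : s \is Creal by rewrite gtr0_real.
have sqdeg_le : sqdeg%:R <= a ^+ 3 by rewrite -natrX ler_nat sqdeg_le.
have cross_ge : a * N%:R <= ncross%:R + a by rewrite -natrM -natrD ler_nat ncross_ge.
have cross_le : ncross%:R <= a * N%:R by rewrite -natrM ler_nat ncross_le.
apply: (rayleigh_quotient_arithC sR (realn _ _) (realn _ _) (realn _ _) (realn _ _)
  (realn _ _) (realn _ _) rR s_gt0 a_ge1 (ler0n _ _) e0_le c_geC (ler0n _ _) sqdeg_le sX
  (ler0n _ _) cross_ge cross_le).
rewrite -rayleigh_vector_norm; apply: le_trans (rayleigh_form_ge (ltW s_gt0)) _.
exact: adjmx_form_le esym (rayleigh_vector_real sR) r_ge.
Qed.

End SplitGraph.

Theorem lemma4p3 (K : nat) :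
  exists c : algC, 0 <= c /\
  forall (T : finType) (e : rel T) (A : {set T}),
    symmetric e -> irreflexive e ->
    (#|A| <= K)%N ->
    (* C := ~: A is an independent set *)
    (forall x y, x \notin A -> y \notin A -> ~~ e x y) ->
    (* all but at most one vertex of C are adjacent to every vertex of A *)
    (#|[set x | (x \notin A) && ~~ [forall a in A, e x a]]| <= 1)%N ->
    (0 < nedges e)%N ->
    forall r : algC, is_spectral_radius (adjmx e) r ->
      `| r - sqrtC (nedges e)%:R - (nedges_in e A)%:R / (#|A|)%:R |
        <= c / sqrtC (nedges e)%:R.
Proof.
exists (4 * K ^ 2)%N%:R; split=> // T e A esym eirr A_le indepC almost_complete m_gt0.
move=> r [[z z_eig <-] r_ge].
have c_ge : (4 * #|A| ^ 2 <= 4 * K ^ 2)%N by rewrite leq_mul2l leq_exp2r.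
have upper := spectral_radius_le esym eirr indepC almost_complete m_gt0 c_ge z_eig.
have lower := spectral_radius_ge esym eirr indepC almost_complete m_gt0 c_ge
  (normr_real z) r_ge.
rewrite -addrA -opprD real_ler_distl ?upper ?lower //.
by rewrite rpredB ?normr_real ?rpredD ?rpredM ?rpredV ?realn ?sqrtC_real ?ler0n.
Qed.
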